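(* Let $(X,\tau_X)$ be a locally compact space and $(Y,\mathcal{V})$ a Hausdorff uniform space. Equip $\mathcal{C}(X,Y)$, the set of continuous point-compact multifunctions from $X$ to $Y$, with the topology of uniform convergence $\tau_{uc}$. A subfamily $\mathcal{F}\subset\mathcal{C}(X,Y)$ is relatively $\tau_{uc}$-compact if and only if (AA1) $\mathcal{F}$ is pointwise relatively compact and equicontinuous, and (AA2) $\mathcal{F}$ satisfies the finite extension property.
   Context: A multifunction $f:X\to Y$ assigns to each $x$ a nonempty $f(x)\subset Y$; it is point-compact if each $f(x)$ is compact. For $V\subset Y\times Y$, $V[a]=\{w:(a,w)\in V\}$, $V[A]=\bigcup_{a\in A}V[a]$, $f(A)=\bigcup_{a\in A}f(a)$; entourages are taken symmetric. $f$ is upper semi-continuous if for each $x$ and open $W\supset f(x)$ there is an open $U_x\ni x$ with $f(U_x)\subset W$; lower semi-continuous if for each $x$ and open $W$ with $f(x)\cap W\neq\emptyset$ there is an open $U_x\ni x$ with $f(u)\cap W\neq\emptyset$ for all $u\in U_x$; continuous if both. For $V\in\mathcal{V}$ let $$V^{\dagger}=\{(f,g):\ \forall x\in X\ \forall y\in f(x)\ \forall z\in g(x):\ (\{y\}\times g(x))\cap V\neq\emptyset,\ (f(x)\times\{z\})\cap V\neq\emptyset\};$$ the sets $V^\dagger$ form a base of the uniformity of uniform convergence, which induces $\tau_{uc}$. The uniformity of pointwise convergence $\mathcal{W}_{pc}$ on $\mathcal{F}$ has subbase the sets defined like $V^\dagger$ but with the quantifier over $x$ replaced by a single fixed $x\in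 X$ (for $x\in X$, $V\in\mathcal{V}$). $\mathcal{F}$ is pointwise relatively compact if $\bigcup\{f(x):f\in\mathcal{F}\}$ is relatively compact in $Y$ for every $x\in X$. $\mathcal{F}$ is equicontinuous if for every $x\in X$ and $V\in\mathcal{V}$ there is an open $U_x\ni x$ such that for all $f\in\mathcal{F}$: $f(U_x)\subset V[f(x)]$, and $f(u)\cap V[y]\neq\emptyset$ for all $u\in U_x$, $y\in f(x)$. $\mathcal{F}$ satisfies the finite extension property if for every $V\in\mathcal{V}$ there is $W\in\mathcal{W}_{pc}$ (on $\mathcal{F}$) with $W\subset V^\dagger\cap(\mathcal{F}\times\mathcal{F})$. Relatively $\tau_{uc}$-compact means the $\tau_{uc}$-closure of $\mathcal{F}$ in $\mathcal{C}(X,Y)$ is compact. *)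

From HB Require Import structures.
From mathcomp Require Import all_boot all_order.
From mathcomp Require Import all_classical all_reals all_analysis.
From Stdlib Require Lists.List.

Set Implicit Arguments.
Unset Strict Implicit.
Unset Printing Implicit Defensive.

Local Open Scope classical_set_scope.

Section MultiFun.
Variables (X : topologicalType) (Y : uniformType).

Definition multifun := X -> set Y.

Definition sym_entourage (V : set (Y * Y)) : Prop :=
  entourage V /\ (forall a b, V (a, b) -> V (b, a)).

Definition ent_at (V : set (Y * Y)) (a : Y) : set Y := [set w | V (a, w)].

Definition ent_img (V : set (Y * Y)) (A : set Y) : set Y :=
  \bigcup_(a in A) ent_at V a.

Definition mimage (f : multifun) (A : set X) : set Y := \bigcup_(a in A) f a.

Definition point_compact (f : multifun) : Prop :=
  forall x, f x !=set0 /\ compact (f x).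

Definition usc (f : multifun) : Prop :=
  forall x (W : set Y), open W -> f x `<=` W ->
    exists U : set X, [/\ open U, U x & mimage f U `<=` W].

Definition lsc (f : multifun) : Prop :=
  forall x (W : set Y), open W -> f x `&` W !=set0 ->
    exists U : set X, [/\ open U, U x & forall u, U u -> f u `&` W !=set0].

Definition mcontinuous (f : multifun) : Prop := usc f /\ lsc f.

Definition CXY : set multifun := [set f | point_compact f /\ mcontinuous f].

Definition dagger_at (V : set (Y * Y)) (x : X) (f g : multifun) : Prop :=
  forall y z, f x y -> g x z ->
    (exists2 w, g x w & V (y, w)) /\ (exists2 w, f x w & V (w, z)).

Definition dagger (V : set (Y * Y)) : set (multifun * multifun) :=
  [set fg | forall x, dagger_at V x fg.1 fg.2].

(* tau_uc-open subsets of C(X,Y) (topology induced by the uniformity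
   whose base is the V^dagger, V symmetric entourage) *)
Definition uc_open (O : set multifun) : Prop :=
  O `<=` CXY /\
  forall f, O f -> exists V, sym_entourage V /\
    forall g, CXY g -> dagger V (f, g) -> O g.

Definition uc_closure (A : set multifun) : set multifun :=
  [set g | CXY g /\ forall O, uc_open O -> O g -> O `&` A !=set0].

Definition uc_compact (K : set multifun) : Prop :=
  K `<=` CXY /\
  forall (I : Type) (O : I -> set multifun), (forall i, uc_open (O i)) ->
    K `<=` \bigcup_i O i ->
    exists s : seq I, K `<=` \bigcup_(i in [set i | Stdlib.Lists.List.In i s]) O i.

Definition rel_uc_compact (F : set multifun) : Prop := uc_compact (uc_closure F).

Definition pointwise_rel_compact (F : set multifun) : Prop :=
  forall x, compact (closure (\bigcup_(f in F) f x)).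

Definition equicontinuous_mf (F : set multifun) : Prop :=
  forall x V, sym_entourage V ->
    exists U : set X, [/\ open U, U x &
      forall f, F f ->
        mimage f U `<=` ent_img V (f x) /\
        (forall u y, U u -> f x y -> f u `&` ent_at V y !=set0)].

(* The uniformity W_pc of pointwise convergence on F has subbase the
   sets {(f,g) | dagger_at V x f g}; a member of W_pc contains (on F x F)
   a finite intersection of subbase sets. *)
Definition finite_extension (F : set multifun) : Prop :=
  forall V, sym_entourage V ->
    exists s : seq (X * set (Y * Y)),
      (forall p, Stdlib.Lists.List.In p s -> sym_entourage p.2) /\
      forall f g, F f -> F g ->
        (forall p, Stdlib.Lists.List.In p s -> dagger_at p.2 p.1 f g) -> dagger V (f, g).

End MultiFun.

(* Compare multifunctions through the Hausdorff-Bourbaki closeness [hclose]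
   of their values; [V]-dagger closeness is [hclose V] at every point.

   Necessity: a tau_uc-compact family is totally bounded.  Finitely many
   continuous compact-valued centres then give equicontinuity, and finitely
   many points witnessing that two centres are far apart give the finite
   extension property; evaluation at [x] of the compact closure is compact.

   Sufficiency: pointwise relative compactness makes an ultrafilter on the
   closure pointwise Cauchy, the finite extension property (which passes to
   the closure) makes it uniformly Cauchy, and the upper limit of its values
   is then a continuous compact-valued multifunction to which it converges. *)

From mathcomp Require Import all_boot all_order.
From mathcomp Require Import all_classical all_reals all_analysis.
From Stdlib Require Lists.List.

Set Implicit Arguments.
Unset Strict Implicit.
Unset Printing Implicit Defensive.

Local Open Scope classical_set_scope.

Local Notation LIn := List.In.

Section FiniteFilterFacts.
Context {T : Type}.

Lemma filter_seq_witness (F : set_system T) (I : Type) (s : seq I)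
    (R : I -> set T -> Prop) : Filter F ->
  (forall i A B, R i A -> B `<=` A -> R i B) ->
  (forall i, LIn i s -> exists A, F A /\ R i A) ->
  exists A, F A /\ forall i, LIn i s -> R i A.
Proof.
move=> FF Rsub; elim: s => [|a s IH] Rs.
  by exists setT; split=> [|? []]; exact: filterT.
have [A [FA RaA]] := Rs a (or_introl erefl).
have [B [FB RsB]] := IH (fun i si => Rs i (or_intror si)).
exists (A `&` B); split; first exact: filterI.
by move=> i [<-|si]; [apply: Rsub RaA _ | apply: Rsub (RsB i si) _] => ? [].
Qed.

Lemma filter_seq_forall (F : set_system T) (I : Type) (s : seq I)
    (P : I -> set T) : Filter F ->
  (forall i, LIn i s -> F (P i)) -> F [set t | forall i, LIn i s -> P i t].
Proof.
move=> FF Ps.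
have [|A [FA AP]] := filter_seq_witness (R := fun i A => A `<=` P i) FF _
  (fun i si => ex_intro _ (P i) (conj (Ps i si) (@subset_refl _ _))).
  by move=> i A B AP BA; apply: subset_trans AP.
by apply: filterS FA => t At i si; apply: AP.
Qed.

Lemma ultra_decide_seq (U : set_system T) (I : Type) (s : seq I)
    (E : I -> set T) : UltraFilter U ->
  exists A, U A /\ forall i, LIn i s -> A `<=` E i \/ A `<=` ~` E i.
Proof.
move=> Uultra; apply: filter_seq_witness.
- by move=> i A B [AE|AE] BA; [left|right]; apply: subset_trans AE.
- by move=> i _; case: (in_ultra_setVsetC (E i) Uultra) => UE;
    [exists (E i); split => //; left | exists (~` E i); split => //; right].
Qed.

Lemma ultra_finite_subcover (op : set T -> Prop) (K : set T) :
  (forall U : set_system T, UltraFilter U -> U K ->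
     exists2 p, K p & forall Q, op Q -> Q p -> U Q) ->
  forall (I : Type) (O : I -> set T), (forall i, op (O i)) ->
    K `<=` \bigcup_i O i ->
  exists s : seq I, K `<=` \bigcup_(i in [set i | LIn i s]) O i.
Proof.
move=> Kultra I O opO cov; apply: contrapT => nocover.
pose B s := K `\` \bigcup_(i in [set i | LIn i s]) O i.
have Bfilter : Filter (filter_from setT B).
  apply: filter_from_filter; first by exists [::].
  move=> s s' _ _; exists (s ++ s') => // t [Kt nt].
  by split; split => // -[i si Oi]; apply: nt; exists i => //;
    apply: List.in_or_app; tauto.
have Bproper : ProperFilter (filter_from setT B).
  apply: filter_from_proper => s _; apply/set0P/eqP => B0.
  apply: nocover; exists s => t Kt; apply: contrapT => nt.
  by have : B s t by []; rewrite B0.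
have [U [Uultra BU]] := ultraFilterLemma Bproper.
have [p Kp Up] : exists2 p, K p & forall Q, op Q -> Q p -> U Q.
  by apply: Kultra => //; apply: BU; exists [::] => // t [].
have [i _ Oip] := cov p Kp.
have /filter_ex [t [Oit [_ nt]]] : U (O i `&` B [:: i]).
  by apply: filterI; [exact: Up | apply: BU; exists [:: i]].
by apply: nt; exists i => //; left.
Qed.

End FiniteFilterFacts.

Section FiniteCoverProperty.
Context {T : topologicalType}.

Lemma nbhs_open_sub (x : T) (P : set T) :
  nbhs x P -> exists U, [/\ open U, U x & U `<=` P].
Proof. by rewrite nbhsE => -[U [oU Ux] UP]; exists U. Qed.

Lemma closure_sub_closed (A E : set T) : closed E -> A `<=` E -> closure A `<=` E.
Proof. by move=> /closure_id {2}-> /closureS. Qed.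

Definition finite_cover_property (K : set T) : Prop :=
  forall P : set T -> Prop,
  (forall k, K k -> exists Q, [/\ open Q, Q k & P Q]) ->
  exists s : seq (set T), (forall Q, LIn Q s -> open Q /\ P Q) /\
    K `<=` \bigcup_(Q in [set Q | LIn Q s]) Q.

Lemma compact_finite_cover (K : set T) : compact K -> finite_cover_property K.
Proof.
move=> cK P Plocal; pose I := {Q : set T | open Q /\ P Q}.
have Icover : K `<=` \bigcup_(i : I) sval i.
  by move=> k /Plocal [Q [oQ Qk PQ]]; exists (exist _ Q (conj oQ PQ)).
have [|s scover] := ultra_finite_subcover (op := open) _
  (fun i : I => (proj2_sig i).1) Icover.
  move=> U Uultra UK; have [p [Kp]] := cK U (@ultra_proper _ _ Uultra) UK.
  rewrite ultra_cvg_clusterE => Up; exists p => // Q oQ Qp.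
  by apply: Up; exact: open_nbhs_nbhs.
exists (map sval s); split.
  by move=> Q /List.in_map_iff [[Q' PQ'] [/= <- _]].
by move=> k /scover [i si ik]; exists (sval i) => //; exact: List.in_map.
Qed.

Lemma finite_cover_compact (K : set T) : finite_cover_property K -> compact K.
Proof.
move=> Kcover F PF FK; apply/set0P/eqP => K0.
have [|s [sP scover]] := Kcover (fun Q => exists2 G, F G & Q `&` G = set0).
  move=> k Kk; have /existsNP [G /existsNP [N /not_implyP [FG /not_implyP]]] :
      ~ cluster F k by move=> Fk; have : (K `&` cluster F) k by []; rewrite K0.
  rewrite nbhsE => -[[Q [oQ Qk] QN] GN]; exists Q; split => //; exists G => //.
  by apply/seteqP; split => // t [Qt Gt]; apply: GN; exists t; split => //; exact: QN.
have /filter_ex [t [Kt nt]] : F (K `&` [set t | forall Q, LIn Q s -> ~ Q t]).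
  apply: filterI => //; apply: filter_seq_forall => Q /sP [_ [G FG QG]].
  by apply: filterS FG => t Gt Qt; have : (Q `&` G) t by []; rewrite QG.
by have [Q Qs Qt] := scover t Kt; exact: nt Qt.
Qed.

End FiniteCoverProperty.

Section SymmetricEntourages.
Context {Y : uniformType}.
Implicit Types (V W : set (Y * Y)) (y : Y).

Lemma sym_entourageI V W :
  sym_entourage V -> sym_entourage W -> sym_entourage (V `&` W).
Proof.
by move=> [eV sV] [eW sW]; split=> [|a b [/sV ? /sW ?]]; first exact: filterI.
Qed.

Lemma entourage_sym_sub E : entourage E -> exists V, sym_entourage V /\ V `<=` E.
Proof.
move=> eE; exists (E `&` E^-1)%relation; split=> [|? []//].
by split=> [|a b []]; [exact: entourage_invI | split].
Qed.

Lemma sym_entourage_refl V y : sym_entourage V -> V (y, y).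
Proof. by move=> [eV _]; exact: entourage_refl. Qed.

Lemma sym_entourage_split V : sym_entourage V -> exists W, sym_entourage W /\
  forall a b c, W (a, b) -> W (b, c) -> V (a, c).
Proof.
move=> [eV _]; have [W [sW WV]] := entourage_sym_sub (entourage_split_ent eV).
by exists W; split => // a b c ab bc; apply: (entourage_split b) => //; apply: WV.
Qed.

Lemma sym_entourage_split3 V : sym_entourage V -> exists W, sym_entourage W /\
  forall a b c d, W (a, b) -> W (b, c) -> W (c, d) -> V (a, d).
Proof.
move=> sV; have [W1 [sW1 W1V]] := sym_entourage_split sV.
have [W [sW WW1]] := sym_entourage_split sW1.
exists W; split => // a b c d ab bc cd; apply: (W1V a c d); first exact: WW1 ab bc.
by apply: (WW1 c d d) => //; exact: sym_entourage_refl.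
Qed.

Lemma sym_entourage_split3_sub V W : sym_entourage W ->
  (forall a b c d, W (a, b) -> W (b, c) -> W (c, d) -> V (a, d)) -> W `<=` V.
Proof.
by move=> sW WV [a b] ab; apply: (WV a b b b) => //; exact: sym_entourage_refl.
Qed.

Lemma sym_entourage_seq (I : Type) (s : seq I) (Q : I -> set (Y * Y) -> Prop) :
  (forall i W W', Q i W -> W' `<=` W -> Q i W') ->
  (forall i, LIn i s -> exists W, sym_entourage W /\ Q i W) ->
  exists W, sym_entourage W /\ forall i, LIn i s -> Q i W.
Proof.
move=> Qsub Qs.
have [|E [eE EQ]] := filter_seq_witness (s := s) (@entourage_filter Y) Qsub.
  by move=> i /Qs [W [[eW _] QW]]; exists W.
have [W [sW WE]] := entourage_sym_sub eE.
by exists W; split => // i si; exact: Qsub (EQ i si) WE.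
Qed.

Lemma ent_at_nbhs V y : sym_entourage V -> nbhs y (ent_at V y).
Proof. by move=> [eV _]; apply/nbhsP; exists V => // z /xsectionP. Qed.

Lemma ent_img_interior V (B : set Y) : sym_entourage V ->
  B `<=` interior (ent_img V B).
Proof. by move=> sV b Bb; apply: filterS (ent_at_nbhs b sV) => z; exists b. Qed.

Lemma nbhs_ent_at y N : nbhs y N -> exists V, sym_entourage V /\ ent_at V y `<=` N.
Proof.
move=> /nbhsP [E eE EN]; have [V [sV VE]] := entourage_sym_sub eE.
by exists V; split => // z Vyz; apply: EN; apply/xsectionP; exact: VE.
Qed.

Lemma closure_ent_at V W y : sym_entourage W ->
  (forall a b c, W (a, b) -> W (b, c) -> V (a, c)) ->
  closure (ent_at W y) `<=` ent_at V y.
Proof.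
move=> sW WV p /(_ _ (ent_at_nbhs p sW)) [q [Wyq Wpq]].
by apply: (WV y q p) => //; exact: sW.2.
Qed.

Lemma compact_ent_img_sub (K Q : set Y) : compact K -> open Q -> K `<=` Q ->
  exists V, sym_entourage V /\ ent_img V K `<=` Q.
Proof.
move=> /compact_finite_cover cK oQ KQ.
have [|s [sP scover]] :=
    cK (fun N => exists W, sym_entourage W /\ ent_img W N `<=` Q).
  move=> k Kk; have [V [sV VQ]] : exists V, sym_entourage V /\ ent_at V k `<=` Q.
    by apply: nbhs_ent_at; apply: open_nbhs_nbhs; split => //; exact: KQ.
  have [W [sW WV]] := sym_entourage_split sV.
  exists (interior (ent_at W k)).
  split; [exact: open_interior | exact: ent_at_nbhs |].
  exists W; split => // z [a /interior_subset Wka Waz].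
  by apply: VQ; exact: WV Wka Waz.
have [|V [sV VQ]] := sym_entourage_seq (s := s) _ (fun N sN => (sP N sN).2).
  move=> N W W' WQ W'W z [a Na W'az]; apply: WQ; exists a => //; exact: W'W.
exists V; split => // z [a Ka Vaz]; have [N sN Na] := scover a Ka.
by apply: VQ sN _ _; exists a.
Qed.

End SymmetricEntourages.

Section HausdorffCloseness.
Context {Y : uniformType}.
Implicit Types (V W : set (Y * Y)) (A B C D : set Y).

Definition hclose V A B : Prop :=
  (forall y, A y -> exists2 w, B w & V (y, w)) /\
  (forall z, B z -> exists2 w, A w & V (w, z)).

Lemma hclose_sym V A B : sym_entourage V -> hclose V A B -> hclose V B A.
Proof.
move=> [_ sV] [AB BA]; split.
  by move=> y /BA [w Aw Vwy]; exists w => //; exact: sV.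
by move=> z /AB [w Bw Vzw]; exists w => //; exact: sV.
Qed.

Lemma hclose_refl V A : sym_entourage V -> hclose V A A.
Proof. by move=> sV; split=> y Ay; exists y => //; exact: sym_entourage_refl. Qed.

Lemma hclose_sub V V' A B : V `<=` V' -> hclose V A B -> hclose V' A B.
Proof.
move=> VV' [AB BA]; split.
  by move=> y /AB [w Bw Vyw]; exists w => //; exact: VV'.
by move=> z /BA [w Aw Vwz]; exists w => //; exact: VV'.
Qed.

Lemma hclose_trans V1 V2 V3 A B C :
  (forall a b c, V1 (a, b) -> V2 (b, c) -> V3 (a, c)) ->
  hclose V1 A B -> hclose V2 B C -> hclose V3 A C.
Proof.
move=> V123 [AB BA] [BC CB]; split.
  move=> y /AB [w Bw V1yw]; have [w' Cw' V2ww'] := BC w Bw.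
  by exists w' => //; exact: V123 V1yw V2ww'.
move=> z /CB [w Bw V2wz]; have [w' Aw' V1w'w] := BA w Bw.
by exists w' => //; exact: V123 V1w'w V2wz.
Qed.

Lemma hclose_trans3 V W A B C D :
  (forall a b c d, W (a, b) -> W (b, c) -> W (c, d) -> V (a, d)) ->
  hclose W A B -> hclose W B C -> hclose W C D -> hclose V A D.
Proof.
move=> WV AB BC CD.
have AC : hclose [set p | exists2 b, W (p.1, b) & W (b, p.2)] A C.
  by apply: hclose_trans AB BC => a b c ab bc; exists b.
by apply: hclose_trans AC CD => a c d [b ab bc] cd; exact: WV ab bc cd.
Qed.

Lemma hclose_ent_img V A B : hclose V A B -> B `<=` ent_img V A.
Proof. by move=> [_ BA] z /BA [w Aw Vwz]; exists w. Qed.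

End HausdorffCloseness.

Section MultifunctionContinuity.
Context {X : topologicalType} {Y : uniformType}.
Local Notation MF := (multifun X Y).
Implicit Types (V W : set (Y * Y)) (f g : MF).

Lemma hclose_dagger_at V x f g : hclose V (f x) (g x) -> dagger_at V x f g.
Proof. by move=> [fg gf] y z fy gz; split; [exact: fg | exact: gf]. Qed.

Lemma dagger_at_hclose V x f g : f x !=set0 -> g x !=set0 ->
  dagger_at V x f g -> hclose V (f x) (g x).
Proof.
move=> [y0 fy0] [z0 gz0] fg; split.
  by move=> y fy; have [] := fg y z0 fy gz0.
by move=> z gz; have [] := fg y0 z fy0 gz.
Qed.

Definition uclose V f g := forall x, hclose V (f x) (g x).

Lemma uclose_dagger V f g : uclose V f g -> dagger V (f, g).
Proof. by move=> fg x; exact: hclose_dagger_at. Qed.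

Lemma CXY_nonempty f x : CXY f -> f x !=set0.
Proof. by move=> [/(_ x) []]. Qed.

Lemma dagger_uclose V f g : CXY f -> CXY g -> dagger V (f, g) -> uclose V f g.
Proof.
move=> fC gC fg x.
by apply: dagger_at_hclose; [exact: CXY_nonempty | exact: CXY_nonempty | exact: fg].
Qed.

Definition hcontinuous_at f x :=
  forall V, sym_entourage V -> \forall u \near x, hclose V (f x) (f u).

Lemma mcontinuous_hcontinuous_at f x :
  compact (f x) -> usc f -> lsc f -> hcontinuous_at f x.
Proof.
move=> /compact_finite_cover fx_cover fusc flsc W sW.
have near_sub : \forall u \near x, f u `<=` ent_img W (f x).
  have [U [oU Ux fUW]] := fusc x _ (@open_interior _ (ent_img W (f x)))
    (ent_img_interior sW).
  apply: filterS (open_nbhs_nbhs (conj oU Ux)) => u Uu z fuz.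
  by apply: interior_subset; apply: fUW; exists u.
have [W' [sW' W'W]] := sym_entourage_split sW.
have [|s [sP scover]] := fx_cover
    (fun N : set Y => exists c, [/\ f x c, N c & N `<=` ent_at W' c]).
  move=> k fxk; exists (interior (ent_at W' k)).
  by split; [exact: open_interior | exact: ent_at_nbhs | exists k; split;
    [|exact: ent_at_nbhs|exact: interior_subset]].
have near_meet : \forall u \near x, forall N, LIn N s -> f u `&` N !=set0.
  apply: filter_seq_forall => N /sP [oN [c [fxc Nc _]]].
  have [U [oU Ux fUN]] := flsc x N oN (ex_intro _ c (conj fxc Nc)).
  exact: filterS (open_nbhs_nbhs (conj oU Ux)) => u /fUN.
apply: filterS (filterI near_sub near_meet) => u [fuW fuN]; split => [y fxy|z].
  have [N sN Ny] := scover y fxy; have [_ [c [_ _ NW']]] := sP N sN.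
  have [w [fuw Nw]] := fuN N sN; exists w => //.
  by apply: (W'W y c w); [exact: sW'.2 (NW' y Ny) | exact: NW'].
by move=> /fuW [w fxw Wwz]; exists w.
Qed.

Lemma CXY_hcontinuous_at f x : CXY f -> hcontinuous_at f x.
Proof.
by move=> [/(_ x) [_ fx_compact] [fusc flsc]]; exact: mcontinuous_hcontinuous_at.
Qed.

Lemma hcontinuous_mcontinuous f : (forall x, compact (f x)) ->
  (forall x, hcontinuous_at f x) -> mcontinuous f.
Proof.
move=> fcompact fcont; split=> x O oO.
  move=> fxO; have [V [sV VO]] := compact_ent_img_sub (fcompact x) oO fxO.
  have [U [oU Ux Uclose]] := nbhs_open_sub (fcont x V sV).
  exists U; split => // z [u /Uclose fxu fuz].
  by apply: VO; exact: hclose_ent_img fxu _ fuz.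
move=> [z [fxz Oz]]; have [V [sV VO]] := nbhs_ent_at (open_nbhs_nbhs (conj oO Oz)).
have [U [oU Ux Uclose]] := nbhs_open_sub (fcont x V sV).
exists U; split => // u /Uclose [fxfu _]; have [w fuw Vzw] := fxfu z fxz.
by exists w; split => //; exact: VO.
Qed.

Lemma uclose_hcontinuous_at f x :
  (forall V, sym_entourage V -> exists2 g, uclose V g f & hcontinuous_at g x) ->
  hcontinuous_at f x.
Proof.
move=> approx V sV; have [W [sW WV]] := sym_entourage_split3 sV.
have [g gf gcont] := approx W sW.
apply: filterS (gcont W sW) => u gxu.
exact: hclose_trans3 WV (hclose_sym sW (gf x)) gxu (gf u).
Qed.

Lemma uniform_hcontinuous_equicontinuous (F : set MF) :
  (forall x V, sym_entourage V ->
     \forall u \near x, forall f, F f -> hclose V (f x) (f u)) ->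
  equicontinuous_mf F.
Proof.
move=> Fcont x V sV; have [U [oU Ux Uclose]] := nbhs_open_sub (Fcont x V sV).
exists U; split => // f Ff; split.
  by move=> z [u /Uclose fxu fuz]; exact: hclose_ent_img (fxu f Ff) _ fuz.
by move=> u y /Uclose fxu /(fxu f Ff).1 [w fuw Vyw]; exists w.
Qed.

End MultifunctionContinuity.

Section UniformConvergenceTopology.
Context {X : topologicalType} {Y : uniformType}.
Local Notation MF := (multifun X Y).
Implicit Types (V W : set (Y * Y)) (f g h : MF) (F K : set MF).

Definition uc_interior (S : set MF) : set MF :=
  [set g | CXY g /\ exists V, sym_entourage V /\
    forall h, CXY h -> uclose V g h -> S h].

Lemma uc_interior_open S : uc_open (uc_interior S).
Proof.
split=> [g []//|g [gC [V [sV gS]]]].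
have [W [sW WV]] := sym_entourage_split sV.
exists W; split => // h hC /(dagger_uclose gC hC) gh; split => //.
exists W; split => // k kC hk; apply: gS => // x.
exact: hclose_trans WV (gh x) (hk x).
Qed.

Lemma uc_interior_sub S : uc_interior S `<=` S.
Proof. by move=> g [gC [V [sV gS]]]; apply: gS => // x; exact: hclose_refl. Qed.

Lemma uc_interior_ball V g : CXY g -> sym_entourage V ->
  uc_interior [set h | uclose V g h] g.
Proof. by move=> gC sV; split => //; exists V; split. Qed.

Lemma uc_open_uclose (Q : set MF) f : uc_open Q -> Q f ->
  exists V, sym_entourage V /\ forall h, CXY h -> uclose V f h -> Q h.
Proof.
move=> [_ Qopen] /Qopen [V [sV VQ]]; exists V; split => // h hC fh.
by apply: VQ => //; exact: uclose_dagger.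
Qed.

Lemma uc_closure_CXY F : uc_closure F `<=` @CXY X Y.
Proof. by move=> g []. Qed.

Lemma sub_uc_closure F : F `<=` @CXY X Y -> F `<=` uc_closure F.
Proof. by move=> FC f Ff; split=> [|Q _ Qf]; [exact: FC | exists f]. Qed.

Lemma uc_closure_approx F g V : uc_closure F g -> sym_entourage V ->
  exists2 f, F f & uclose V g f.
Proof.
move=> [gC gcl] sV.
have [f [/uc_interior_sub gf Ff]] := gcl _ (uc_interior_open _)
  (uc_interior_ball gC sV).
by exists f.
Qed.

Lemma uc_closure_pointwise F g x :
  uc_closure F g -> g x `<=` closure (\bigcup_(f in F) f x).
Proof.
move=> gcl y gxy N /nbhs_ent_at [V [sV VN]].
have [f Ff gf] := uc_closure_approx gcl sV; have [w fxw Vyw] := (gf x).1 y gxy.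
by exists w; split; [exists f | exact: VN].
Qed.

Definition uc_totally_bounded K := forall V, sym_entourage V ->
  exists s : seq MF, (forall g, LIn g s -> CXY g) /\
    forall h, K h -> exists2 g, LIn g s & uclose V g h.

Lemma uc_compact_totally_bounded K : uc_compact K -> uc_totally_bounded K.
Proof.
move=> [KC Kcover] V sV.
have [|s scover] := Kcover {g : MF | CXY g}
    (fun g : {g : MF | CXY g} => uc_interior [set h | uclose V (sval g) h])
    (fun=> uc_interior_open _).
  move=> h Kh; exists (exist _ h (KC h Kh)) => //.
  exact: uc_interior_ball (KC h Kh) sV.
exists (map sval s); split.
  by move=> g /List.in_map_iff [[g' g'C] [/= <- _]].
move=> h /scover [g sg /uc_interior_sub gh].
by exists (sval g) => //; exact: List.in_map.
Qed.

End UniformConvergenceTopology.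

Section TotallyBoundedFamilies.
Context {X : topologicalType} {Y : uniformType}.
Local Notation MF := (multifun X Y).
Implicit Types (V W : set (Y * Y)) (f g h : MF) (F K : set MF).

Lemma totally_bounded_equicontinuous F :
  uc_totally_bounded F -> equicontinuous_mf F.
Proof.
move=> Fbounded; apply: uniform_hcontinuous_equicontinuous => x V sV.
have [W [sW WV]] := sym_entourage_split3 sV.
have [s [sC sF]] := Fbounded W sW.
have : \forall u \near x, forall g, LIn g s -> hclose W (g x) (g u).
  by apply: filter_seq_forall => g /sC gC; exact: CXY_hcontinuous_at.
apply: filterS => u s_near f /sF [g sg gf].
exact: hclose_trans3 WV (hclose_sym sW (gf x)) (s_near g sg) (gf u).
Qed.

Lemma finite_separating_points W (ps : seq (MF * MF)) :
  exists xs : seq X, forall q, LIn q ps ->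
    uclose W q.1 q.2 \/ exists2 x, LIn x xs & ~ hclose W (q.1 x) (q.2 x).
Proof.
elim: ps => [|q ps [xs xsP]]; first by exists [::].
have [qclose|/existsNP [x qx]] := pselect (uclose W q.1 q.2).
  by exists xs => q' [<-|/xsP]; [left|].
exists (x :: xs) => q' [<-|/xsP [|[x' xsx' q'x']]];
  [right; exists x; [left|] | left | right; exists x'; [right|]] => //.
Qed.

Lemma totally_bounded_finite_extension F : F `<=` @CXY X Y ->
  uc_totally_bounded F -> finite_extension F.
Proof.
move=> FC Fbounded V sV.
have [W1 [sW1 W1V]] := sym_entourage_split3 sV.
have [W [sW WW1]] := sym_entourage_split3 sW1.
have [s [_ sF]] := Fbounded W sW.
have [xs xsP] := finite_separating_points W1 (List.list_prod s s).
exists (map (fun x => (x, W)) xs).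
split; first by move=> p /List.in_map_iff [x [<- _]].
move=> f g Ff Fg fg_xs; have [f' sf' f'f] := sF f Ff; have [g' sg' g'g] := sF g Fg.
have WW1' := sym_entourage_split3_sub sW WW1.
have [f'g'|[x xsx nf'g']] := xsP (f', g') (List.in_prod _ _ _ _ sf' sg').
  apply: uclose_dagger => x; apply: hclose_trans3 W1V _ (f'g' x) _.
    exact: hclose_sub WW1' (hclose_sym sW (f'f x)).
  exact: hclose_sub WW1' (g'g x).
have fgx : hclose W (f x) (g x).
  apply: dagger_at_hclose;
    [exact: CXY_nonempty (FC f Ff) | exact: CXY_nonempty (FC g Fg) |].
  exact: fg_xs (x, W) (List.in_map _ _ _ xsx).
by case: nf'g'; exact: hclose_trans3 WW1 (f'f x) fgx (hclose_sym sW (g'g x)).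
Qed.

Lemma uc_compact_eval_compact K x : uc_compact K -> compact (\bigcup_(g in K) g x).
Proof.
move=> [KC Kcover]; apply: finite_cover_compact => P Plocal.
(* [good (h, V, s)]: the values at [x] of the [V]-ball around [h] lie in the
   union of the finitely many open [P]-sets [s]. *)
pose good (i : MF * set (Y * Y) * seq (set Y)) := [/\ CXY i.1.1, sym_entourage i.1.2,
  forall N, LIn N i.2 -> open N /\ P N &
  ent_img i.1.2 (i.1.1 x) `<=` \bigcup_(N in [set N | LIn N i.2]) N].
have [|L Lcover] := Kcover {i | good i}
    (fun i : {i | good i} => uc_interior [set h | uclose (sval i).1.2 (sval i).1.1 h])
    (fun=> uc_interior_open _).
  move=> h Kh; have hC := KC h Kh; have hx_compact := (hC.1 x).2.
  have /compact_finite_cover hx_cover := hx_compact.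
  have [|s [sP scover]] := hx_cover P; first by move=> k hk; apply: Plocal; exists h.
  have [V [sV VP]] := compact_ent_img_sub hx_compact
    (bigcup_open (fun N sN => (sP N sN).1)) scover.
  by exists (exist _ (h, V, s) (And4 hC sV sP VP)) => //; exact: uc_interior_ball.
exists (List.flat_map (fun i => (sval i).2) L); split.
  by move=> N /List.in_flat_map [[i [_ _ iP _]] [_ /iP]].
move=> k [h Kh hk]; have [i Li /uc_interior_sub ih] := Lcover h Kh.
have [w iw Vwk] := (ih x).2 k hk; have [_ _ _ iV] := svalP i.
have [N iN Nk] := iV k (ex_intro2 _ _ w iw Vwk).
by exists N => //; apply/List.in_flat_map; exists i.
Qed.

Lemma rel_uc_compact_totally_bounded F : F `<=` @CXY X Y ->
  rel_uc_compact F -> uc_totally_bounded F.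
Proof.
move=> FC /uc_compact_totally_bounded cl_bounded V /cl_bounded [s [sC sF]].
by exists s; split => // f /(sub_uc_closure FC); exact: sF.
Qed.

Lemma rel_uc_compact_pointwise_rel_compact F : hausdorff_space Y ->
  F `<=` @CXY X Y -> rel_uc_compact F -> pointwise_rel_compact F.
Proof.
move=> hY FC /uc_compact_eval_compact cl_eval x; have Kx := cl_eval x.
apply: subclosed_compact Kx _; first exact: closed_closure.
apply: closure_sub_closed; first exact: compact_closed.
by move=> y [f Ff fxy]; exists f => //; exact: sub_uc_closure.
Qed.

End TotallyBoundedFamilies.

Section UltrafilterLimit.
Context {X : topologicalType} {Y : uniformType}.
Local Notation MF := (multifun X Y).
Implicit Types (V W : set (Y * Y)) (f g h : MF).
Variable F : set MF.
Hypothesis FC : F `<=` @CXY X Y.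
Hypothesis Fpw : pointwise_rel_compact F.
Hypothesis Ffe : finite_extension F.
Local Notation cl := (uc_closure F).

Lemma finite_extension_uc_closure : finite_extension cl.
Proof.
move=> V sV; have [V1 [sV1 V1V]] := sym_entourage_split3 sV.
have [s [sP sext]] := Ffe sV1.
have [|A0 [sA0 A0s]] := sym_entourage_seq (s := s)
  (Q := fun p W => forall a b c d, W (a, b) -> W (b, c) -> W (c, d) -> p.2 (a, d)) _
  (fun p sp => sym_entourage_split3 (sP p sp)).
  move=> p W W' Wp W'W a b c d ab bc cd.
  exact: Wp (W'W _ ab) (W'W _ bc) (W'W _ cd).
pose A := A0 `&` V1; have sA : sym_entourage A by exact: sym_entourageI.
have AV1 : A `<=` V1 by move=> ? [].
exists (map (fun p => (p.1, A)) s).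
split; first by move=> p /List.in_map_iff [q [<- _]].
move=> g g' gcl g'cl gg'; have [gC g'C] := (uc_closure_CXY gcl, uc_closure_CXY g'cl).
have [f Ff gf] := uc_closure_approx gcl sA.
have [f' Ff' g'f'] := uc_closure_approx g'cl sA.
have ff' : uclose V1 f f'.
  apply: dagger_uclose; [exact: FC | exact: FC | apply: sext => // p sp].
  apply: hclose_dagger_at; apply: hclose_trans3 (hclose_sym sA (gf p.1)) _ (g'f' p.1).
    by move=> a b c d [ab _] [bc _] [cd _]; exact: A0s ab bc cd.
  apply: dagger_at_hclose; [exact: CXY_nonempty | exact: CXY_nonempty |].
  by apply: (gg' (p.1, A)); apply/List.in_map_iff; exists p.
apply: uclose_dagger => x; apply: hclose_trans3 V1V (hclose_sub AV1 (gf x)) (ff' x) _.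
exact: hclose_sub AV1 (hclose_sym sA (g'f' x)).
Qed.

Section Limit.
Variable UU : set_system MF.
Hypothesis UUultra : UltraFilter UU.
Hypothesis UUcl : UU cl.

Lemma ultra_pointwise_cauchy x W : sym_entourage W -> exists A,
  [/\ UU A, A `<=` cl & forall g g', A g -> A g' -> hclose W (g x) (g' x)].
Proof.
move=> sW; have [W' [sW' W'W]] := sym_entourage_split sW.
have /compact_finite_cover Kx_cover := @Fpw x.
have [|s [sP scover]] := Kx_cover
  (fun N : set Y => exists c, N `<=` ent_at W' c).
  move=> k _; exists (interior (ent_at W' k)).
  split; [exact: open_interior | exact: ent_at_nbhs |].
  by exists k; exact: interior_subset.
have [A0 [UA0 A0s]] :=
  ultra_decide_seq s (fun N => [set g : MF | g x `&` N !=set0]) UUultra.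
have half g g' : (A0 `&` cl) g -> (A0 `&` cl) g' ->
    forall y, g x y -> exists2 w, g' x w & W (y, w).
  move=> [A0g gcl] [A0g' _] y gxy.
  have [N sN Ny] := scover y (uc_closure_pointwise gcl gxy).
  have [_ [c Nc]] := sP N sN.
  have [A0N|A0N] := A0s N sN; last by case: (A0N g A0g); exists y.
  have [w [g'xw Nw]] := A0N g' A0g'; exists w => //.
  by apply: (W'W y c w); [exact: sW'.2 (Nc y Ny) | exact: Nc].
exists (A0 `&` cl); split=> [|g [] //|g g' Ag Ag']; first exact: filterI.
split; first exact: half.
by move=> z /(half g' g Ag' Ag) [w gxw Wzw]; exists w => //; exact: sW.2.
Qed.

Lemma ultra_uniform_cauchy V : sym_entourage V -> exists A,
  [/\ UU A, A `<=` cl & forall g g', A g -> A g' -> uclose V g g'].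
Proof.
move=> sV; have [s [sP sext]] := finite_extension_uc_closure sV.
have pointwise p : LIn p s -> exists A, UU A /\
    forall g g', (A `&` cl) g -> (A `&` cl) g' -> hclose p.2 (g p.1) (g' p.1).
  move=> sp; have [A [UA Acl Ap]] := ultra_pointwise_cauchy p.1 (sP p sp).
  by exists A; split => // g g' [Ag _] [Ag' _]; exact: Ap.
have [|A0 [UA0 A0s]] := filter_seq_witness _ _ pointwise.
  by move=> p A B Ap BA g g' [Bg gcl] [Bg' g'cl]; apply: Ap; split => //; exact: BA.
exists (A0 `&` cl); split=> [|g [] //|g g' Ag Ag']; first exact: filterI.
apply: dagger_uclose; [exact: uc_closure_CXY Ag.2 | exact: uc_closure_CXY Ag'.2 |].
apply: sext => [||p sp]; [exact: Ag.2 | exact: Ag'.2 |].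
exact: hclose_dagger_at (A0s p sp g g' Ag Ag').
Qed.

Definition ultra_limit : MF :=
  fun x => \bigcap_(A in UU) closure (\bigcup_(g in A `&` cl) g x).

Lemma ultra_limit_closed x : closed (ultra_limit x).
Proof. by apply: closed_bigI => A _; exact: closed_closure. Qed.

Lemma ultra_limit_sub x : ultra_limit x `<=` closure (\bigcup_(f in F) f x).
Proof.
move=> y /(_ cl UUcl); apply: closure_sub_closed; first exact: closed_closure.
by move=> z [g [_ gcl] gxz]; exact: uc_closure_pointwise gcl z gxz.
Qed.

Lemma ultra_limit_meet x (B : set MF) (P : set Y) : UU B ->
  (forall g, B g -> cl g -> g x `&` P !=set0) ->
  exists p, ultra_limit x p /\ closure P p.
Proof.
move=> UB BP; pose T A := closure (\bigcup_(g in A `&` B `&` cl) (g x `&` P)).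
have Tfilter : Filter (filter_from UU T).
  apply: filter_from_filter; first by exists setT; exact: filterT.
  move=> A1 A2 UA1 UA2; exists (A1 `&` A2); first exact: filterI.
  by move=> y Ty; split; apply: closureS Ty => z [g [[[? ?] ?] ?] gxz]; exists g.
have Tproper : ProperFilter (filter_from UU T).
  apply: filter_from_proper => A UA.
  have /filter_ex [g [[Ag Bg] gcl]] : UU (A `&` B `&` cl).
    by apply: filterI => //; exact: filterI.
  by have [y Py] := BP g Bg gcl; exists y; apply: subset_closure; exists g.
have [|p [_ p_cluster]] := @Fpw x _ Tproper.
  exists setT; first exact: filterT.
  apply: closure_sub_closed; first exact: closed_closure.
  by move=> z [g [_ gcl] [gxz _]]; exact: uc_closure_pointwise gcl z gxz.
have TAp A : UU A -> T A p.
  move=> UA; rewrite clusterE in p_cluster.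
  have : closure (T A) p by apply: p_cluster; exists A.
  by apply: closure_sub_closed; first exact: closed_closure.
exists p; split=> [A UA|].
  by apply: closureS (TAp A UA) => z [g [[Ag _] gcl] [gxz _]]; exists g.
by apply: closureS (TAp setT filterT) => z [g _ [_ Pz]].
Qed.

Lemma ultra_limit_uclose V : sym_entourage V -> exists A,
  [/\ UU A, A `<=` cl & forall g, A g -> uclose V g ultra_limit].
Proof.
move=> sV; have [W [sW WV]] := sym_entourage_split sV.
have [A [UA Acl Asmall]] := ultra_uniform_cauchy sW.
exists A; split => // g Ag x; split=> [y gxy|z].
  have [|p [limp clp]] := ultra_limit_meet (x := x) (P := ent_at W y) UA.
    by move=> g' Ag' _; have [w g'xw Wyw] := (Asmall g g' Ag Ag' x).1 y gxy; exists w.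
  by exists p => //; exact: (closure_ent_at sW WV clp).
move=> /(_ A UA) /(_ _ (ent_at_nbhs z sW)) [q [[g' [Ag' _] g'xq] Wzq]].
have [w gxw Wwq] := (Asmall g g' Ag Ag' x).2 q g'xq.
by exists w => //; apply: (WV w q z) => //; exact: sW.2.
Qed.

Lemma ultra_limit_CXY : CXY ultra_limit.
Proof.
have lim_compact x : compact (ultra_limit x).
  exact: subclosed_compact (ultra_limit_closed (x := x)) (@Fpw x)
    (@ultra_limit_sub x).
split=> [x|]; last apply: hcontinuous_mcontinuous => // x.
  split => //; have [|p [limp _]] := ultra_limit_meet (x := x) (P := setT) UUcl.
    by move=> g _ gcl; have [y gxy] := CXY_nonempty x (uc_closure_CXY gcl); exists y.
  by exists p.
apply: uclose_hcontinuous_at => V sV; have [A [UA Acl Alim]] := ultra_limit_uclose sV.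
have /filter_ex [g Ag] := UA.
by exists g; [exact: Alim | exact: CXY_hcontinuous_at (uc_closure_CXY (Acl g Ag))].
Qed.

Lemma ultra_limit_nbhs (Q : set MF) : uc_open Q -> Q ultra_limit -> UU Q.
Proof.
move=> Qopen Qlim; have [V [sV VQ]] := uc_open_uclose Qopen Qlim.
have [A [UA Acl Alim]] := ultra_limit_uclose sV.
apply: filterS UA => g Ag; apply: VQ; first exact: uc_closure_CXY (Acl g Ag).
by move=> x; exact: hclose_sym sV (Alim g Ag x).
Qed.

Lemma ultra_limit_uc_closure : cl ultra_limit.
Proof.
split=> [|Q Qopen Qlim]; first exact: ultra_limit_CXY.
have /filter_ex [g [Qg gcl]] : UU (Q `&` cl).
  by apply: filterI => //; exact: ultra_limit_nbhs.
by case: gcl => _; apply.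
Qed.

End Limit.

Lemma pointwise_compact_finite_extension_rel_uc_compact : rel_uc_compact F.
Proof.
split=> [g|]; first exact: uc_closure_CXY.
apply: ultra_finite_subcover => UU UUultra UUcl.
by exists (ultra_limit UU); [exact: ultra_limit_uc_closure | exact: ultra_limit_nbhs].
Qed.

End UltrafilterLimit.

Theorem theorem3p2 (X : topologicalType) (Y : uniformType)
  (hX : locally_compact [set: X]) (hY : hausdorff_space Y)
  (F : set (multifun X Y)) (hF : F `<=` CXY (X:=X) (Y:=Y)) :
  rel_uc_compact F <->
  ((pointwise_rel_compact F /\ equicontinuous_mf F) /\ finite_extension F).
Proof.
split=> [Fcompact|[[Fpw _] Ffe]].
  have Fbounded := rel_uc_compact_totally_bounded hF Fcompact.
  split; [split|].
  - exact: rel_uc_compact_pointwise_rel_compact hY hF Fcompact.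
  - exact: totally_bounded_equicontinuous.
  - exact: totally_bounded_finite_extension.
exact: pointwise_compact_finite_extension_rel_uc_compact hF Fpw Ffe.
Qed.
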